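(* The set of operators $T\in\mathscr{L}(\mathscr{M}(\Omega))$ that are $\sigma(\mathscr{M}(\Omega),C_b(\Omega))$-continuous (equivalently, weakly continuous operators whose norm adjoint $T^*$ maps $C_b(\Omega)$ into $C_b(\Omega)$) is in general not a sublattice of $\mathscr{L}(\mathscr{M}(\Omega),\sigma)$: there exist a Polish space $\Omega$ (e.g. $\Omega=\{0\}\cup\{\pm 1/n:n\in\mathbb{N}\}\subset\mathbb{R}$) and a weakly continuous operator $T$ with $T^*C_b(\Omega)\subset C_b(\Omega)$ such that the weakly continuous operator associated with $\lvert k\rvert$ ($k$ the kernel of $T$) does not leave $C_b(\Omega)$ invariant under its adjoint, and moreover $T$ has no modulus in the ordered space of $\sigma(\mathscr{M}(\Omega),C_b(\Omega))$-continuous operators.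
   Context: $\Omega$ Polish, $\mathscr{M}(\Omega)$ the finite signed Borel measures, $C_b(\Omega)$ the bounded continuous functions, $B_b(\Omega)$ the bounded Borel functions, with duality $\langle f,\mu\rangle=\int f\,d\mu$. A transition kernel is a map $k:\Omega\times\mathscr{B}(\Omega)\to\mathbb{R}$, signed measure in the second variable and Borel measurable in the first; bounded if $\sup_x\lvert k\rvert(x,\Omega)<\infty$. A weakly continuous operator is one of the form $(T\mu)(A)=\int k(x,A)\,d\mu(x)$ with $k$ a bounded transition kernel (its associated kernel); $\mathscr{L}(\mathscr{M}(\Omega),\sigma)$ is the space of these. Operators are ordered by positivity: $S\le T$ iff $S\mu\le T\mu$ for all positive $\mu$. *)

From HB Require Import structures.
From mathcomp Require Import all_boot all_order all_algebra.
From mathcomp Require Import all_classical all_reals all_analysis.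
Set Implicit Arguments. Unset Strict Implicit. Unset Printing Implicit Defensive.
Import Order.TTheory GRing.Theory Num.Theory.
Import numFieldNormedType.Exports.
Local Open Scope classical_set_scope.
Local Open Scope ring_scope.

Definition Om0 (R : realType) : set R :=
  [set x | x = 0 \/ exists n : nat, x = (n.+1%:R)^-1 \/ x = - (n.+1%:R)^-1].
Arguments Om0 : clear implicits.
Lemma Om0_0 (R : realType) : Om0 R 0. Proof. by left. Qed.
Definition Om (R : realType) : topologicalType := set_type (Om0 R).
Definition om0 (R : realType) : Om R := SigSub (mem_set (Om0_0 R)).
HB.instance Definition _ (R : realType) := isPointed.Build (Om R) (om0 R).
Definition OmB (R : realType) := g_sigma_algebraType (@open (Om R)).

Section Generic.
Context d (T : measurableType d) (R : realType).
Local Open Scope ereal_scope.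

(* finite signed measure: real-valued, nu(empty)=0, countably additive on
   disjoint sequences of measurable sets (values outside the sigma-algebra
   are irrelevant) *)
Definition is_fsmeasure (nu : set T -> R) : Prop :=
  nu set0 = 0%R /\
  forall F : (set T)^nat, (forall n, measurable (F n)) -> trivIset setT F ->
    ((fun n => \sum_(i < n) nu (F i)) @ \oo --> nu (\bigcup_n F n))%R.

Definition jpos (nu : set T -> R) : set T -> \bar R := fun A =>
  ereal_sup [set (nu B)%:E | B in [set B | measurable B /\ B `<=` A]].
Definition jneg (nu : set T -> R) : set T -> \bar R := fun A =>
  ereal_sup [set (- nu B)%:E | B in [set B | measurable B /\ B `<=` A]].
Definition tvar (nu : set T -> R) : set T -> \bar R := fun A =>
  jpos nu A + jneg nu A.

Definition sint (nu : set T -> R) (f : T -> R) : R :=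
  (fine (integral (jpos nu) setT (EFin \o f)) -
   fine (integral (jneg nu) setT (EFin \o f)))%R.

Definition is_kernel (k : T -> set T -> R) : Prop :=
  (forall x, is_fsmeasure (k x)) /\
  (forall A, measurable A -> measurable_fun setT (fun x => k x A)).
Definition is_bounded_kernel (k : T -> set T -> R) : Prop :=
  is_kernel k /\ exists M : R, forall x, tvar (k x) setT <= M%:E.

Definition abs_kernel (k : T -> set T -> R) : T -> set T -> R :=
  fun x A => fine (tvar (k x) A).

Definition opp_kernel (k : T -> set T -> R) : T -> set T -> R :=
  fun x A => (- k x A)%R.

Definition op_apply (k : T -> set T -> R) (mu : {measure set T -> \bar R})
  (A : set T) : R := fine (\int[mu]_x (k x A)%:E).

Definition op_le (ks kt : T -> set T -> R) : Prop :=
  forall mu : {measure set T -> \bar R}, mu setT < +oo ->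
    forall A, measurable A -> (op_apply ks mu A <= op_apply kt mu A)%R.

End Generic.

Section Concrete.
Variable R : realType.

Definition Cb (f : Om R -> R) : Prop :=
  continuous f /\ exists M : R, forall x, `|f x| <= M.

Definition adjoint (k : OmB R -> set (OmB R) -> R) (f : Om R -> R) : Om R -> R :=
  fun x => sint (k x) f.

Definition adj_preserves_Cb (k : OmB R -> set (OmB R) -> R) : Prop :=
  forall f, Cb f -> Cb (adjoint k f).

(* sigma(M(Omega), C_b(Omega))-continuous operators, i.e. weakly continuous
   operators (given by a bounded kernel) whose adjoint leaves C_b invariant *)
Definition sigma_cont (k : OmB R -> set (OmB R) -> R) : Prop :=
  is_bounded_kernel k /\ adj_preserves_Cb k.

Definition is_modulus_in_sigma_cont (s t : OmB R -> set (OmB R) -> R) : Prop :=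
  sigma_cont s /\ op_le t s /\ op_le (opp_kernel t) s /\
  forall r, sigma_cont r -> op_le t r -> op_le (opp_kernel t) r -> op_le s r.

End Concrete.

From HB Require Import structures.
From mathcomp Require Import all_boot all_order all_algebra.
From mathcomp Require Import all_classical all_reals all_analysis measurable_realfun.
From mathcomp Require Import lra.
Set Implicit Arguments. Unset Strict Implicit. Unset Printing Implicit Defensive.
Import Order.TTheory GRing.Theory Num.Theory.
Import numFieldNormedType.Exports.
Local Open Scope classical_set_scope.
Local Open Scope ring_scope.

(* The witness is k(x) = δ_x - δ_{-|x|}, which vanishes for x <= 0; its adjoint
   f |-> f(x) - f(-|x|) preserves C_b.  But |k|(x) = δ_x + δ_{-x} for x > 0 and 0
   for x <= 0, so |k|^* 1 is 2 at 1/n and 0 at -1/n: it jumps at 0.  The kernels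
   δ_x + δ_{-|x|} and δ_{|x|} + δ_{-x} are σ(M, C_b)-continuous upper bounds of
   ±k, and at the points ±1/n being above ±k and below both of them already
   forces a kernel to agree with |k|.  So any modulus s of k in that space has
   s^* 1 = |k|^* 1 on the points ±1/n, and s^* 1 is discontinuous as well. *)

Lemma ereal_sup_max (R : realType) (S : set (\bar R)) m :
  S m -> (forall y, S y -> (y <= m)%E) -> ereal_sup S = m.
Proof.
move=> Sm ub; apply/eqP; rewrite eq_le; apply/andP; split.
  by apply/ereal_supP => y /ub.
exact: ereal_sup_ubound.
Qed.

Section Indicators.
Context {T : Type} {R : numDomainType}.
Implicit Types (A B : set T) (p q : T).

Lemma indic_in A p : A p -> \1_A p = 1 :> R.
Proof. by move=> Ap; rewrite indicE mem_set. Qed.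

Lemma indic_notin A p : ~ A p -> \1_A p = 0 :> R.
Proof. by move=> Ap; rewrite indicE memNset. Qed.

Lemma indic_ge0 A p : 0 <= \1_A p :> R.
Proof. by rewrite indicE ler0n. Qed.

Lemma normr_indic_le1 A p : `|\1_A p : R| <= 1.
Proof. by rewrite indicE; case: (_ \in _); rewrite ?normr0 ?normr1. Qed.

Lemma indic_le A B p : B `<=` A -> \1_B p <= \1_A p :> R.
Proof.
move=> BA; have [Bp|Bp] := pselect (B p); last by rewrite indic_notin // indic_ge0.
by rewrite !indic_in //; apply: BA.
Qed.

Lemma indic_setIr A B p : B p -> \1_(A `&` B) p = \1_A p :> R.
Proof.
move=> Bp; have [Ap|Ap] := pselect (A p); first by rewrite !indic_in.
by rewrite !indic_notin // => -[].
Qed.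

Lemma indic_setD1 B p q : p <> q -> \1_(B `\ q) p = \1_B p :> R.
Proof.
move=> pq; have [Bp|Bp] := pselect (B p).
  by rewrite !indic_in //; split => //= qp; apply: pq.
by rewrite !indic_notin // => -[].
Qed.

End Indicators.

Section JordanPointMasses.
Context {d : measure_display} {T : measurableType d} {R : realType}.
Hypothesis measurable_set1 : forall a : T, measurable [set a].
Implicit Types (nu : set T -> R) (a b p : T) (A B : set T).

Lemma measurable_setI1 A a : measurable (A `&` [set a]).
Proof. by rewrite setI1; case: ifPn. Qed.

Lemma jpos_eq0_of_le0 nu : (forall B, measurable B -> nu B <= 0) -> nu set0 = 0 ->
  jpos nu = fun _ => 0%E.
Proof.
move=> h h0; apply/funext => A; apply: ereal_sup_max.
  by exists set0; [split=> //; exact: sub0set | rewrite h0].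
by move=> _ [B [mB _] <-]; rewrite lee_fin; exact: h.
Qed.

Lemma jordan_eq0 nu : (forall B, measurable B -> nu B = 0) ->
  jpos nu = (fun _ => 0%E) /\ jneg nu = (fun _ => 0%E).
Proof.
move=> h; split; first by apply: jpos_eq0_of_le0 => [B mB|]; rewrite ?h.
by apply: (@jpos_eq0_of_le0 (fun B => - nu B)) => [B mB|]; rewrite h ?oppr0.
Qed.

Lemma jpos_dirac_add nu a b : (forall B, measurable B -> nu B = \1_B a + \1_B b) ->
  jpos nu = fun A => (\1_A a + \1_A b)%:E.
Proof.
move=> h; apply/funext => A; apply: ereal_sup_max; last first.
  by move=> _ [B [mB BA] <-]; rewrite lee_fin h //; apply: lerD; apply: indic_le.
have mAab : measurable (A `&` ([set a] `|` [set b])).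
  by rewrite setIUr; apply: measurableU; exact: measurable_setI1.
exists (A `&` ([set a] `|` [set b])); first by split => //; exact: subIsetl.
by rewrite h // !indic_setIr //; [right|left].
Qed.

Lemma jneg_dirac_add nu a b : (forall B, measurable B -> nu B = \1_B a + \1_B b) ->
  jneg nu = fun _ => 0%E.
Proof.
move=> h; apply: (@jpos_eq0_of_le0 (fun B => - nu B)) => [B mB|].
  by rewrite h // oppr_le0 addr_ge0 // indic_ge0.
by rewrite h // !indic_notin // addr0 oppr0.
Qed.

Lemma jpos_dirac_sub nu a b : a <> b ->
  (forall B, measurable B -> nu B = \1_B a - \1_B b) ->
  jpos nu = fun A => (\1_A a)%:E.
Proof.
move=> ab h; apply/funext => A; apply: ereal_sup_max; last first.
  move=> _ [B [mB BA] <-]; rewrite lee_fin h //.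
  by rewrite lerBlDr (le_trans (indic_le a BA)) // lerDl indic_ge0.
exists (A `&` [set a]); first by split; [exact: measurable_setI1|exact: subIsetl].
rewrite h; last exact: measurable_setI1.
rewrite indic_setIr // [\1_(_ `&` _) b]indic_notin ?subr0 // => -[_ ba].
exact: ab.
Qed.

Lemma jneg_dirac_sub nu a b : a <> b ->
  (forall B, measurable B -> nu B = \1_B a - \1_B b) ->
  jneg nu = fun A => (\1_A b)%:E.
Proof.
move=> ab h; apply: (@jpos_dirac_sub (fun B => - nu B) b a) => [/esym //|B mB].
by rewrite h // opprB.
Qed.

End JordanPointMasses.

Section SignedIntegralPointMasses.
Context {d : measure_display} {T : measurableType d} {R : realType}.
Hypothesis measurable_set1 : forall a : T, measurable [set a].
Implicit Types (nu : set T -> R) (a b p : T) (A B : set T).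

Lemma integral_dirac_fin (f : T -> R) a : measurable_fun setT f ->
  (\int[\d_a]_(x in setT) (f x)%:E = (f a)%:E)%E.
Proof.
move=> mf; rewrite integral_dirac //; last exact/measurable_EFinP.
by rewrite diracE in_setT mul1e.
Qed.

Lemma dirac_integrable (f : T -> R) a : measurable_fun setT f ->
  (\d_a).-integrable setT (EFin \o f).
Proof.
move=> mf; apply/integrableP; split; first exact/measurable_EFinP.
rewrite integral_dirac_fin ?ltry //.
by apply: measurableT_comp => //; exact: normr_measurable.
Qed.

Lemma sint_eq0 nu (f : T -> R) : (forall B, measurable B -> nu B = 0) -> sint nu f = 0.
Proof.
move=> h; rewrite /sint; have [-> ->] := jordan_eq0 h.
by rewrite -[fun _ => 0%E]/(@mzero _ T R) integral_measure_zero /= subr0.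
Qed.

Lemma sint_dirac_add nu a b (f : T -> R) :
  (forall B, measurable B -> nu B = \1_B a + \1_B b) ->
  measurable_fun setT f -> sint nu f = f a + f b.
Proof.
move=> h mf; rewrite /sint (jpos_dirac_add measurable_set1 h) (jneg_dirac_add h).
rewrite -[fun _ => 0%E]/(@mzero _ T R) integral_measure_zero.
rewrite (_ : (fun A => _) = measure_add \d_a \d_b); last first.
  by apply/funext => A; rewrite measure_addE.
rewrite integral_measure_add //; try exact: dirac_integrable.
by rewrite !integral_dirac_fin //= subr0.
Qed.

Lemma sint_dirac_sub nu a b (f : T -> R) : a <> b ->
  (forall B, measurable B -> nu B = \1_B a - \1_B b) ->
  measurable_fun setT f -> sint nu f = f a - f b.
Proof.
move=> ab h mf; rewrite /sint (jpos_dirac_sub measurable_set1 ab h)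
  (jneg_dirac_sub measurable_set1 ab h).
rewrite (_ : (fun A => _) = \d_a); last by apply/funext => A; rewrite diracE indicE.
rewrite (_ : (fun A => _) = \d_b); last by apply/funext => A; rewrite diracE indicE.
by rewrite !integral_dirac_fin.
Qed.

End SignedIntegralPointMasses.

Section FiniteSignedMeasures.
Context {d : measure_display} {T : measurableType d} {R : realType}.
Hypothesis measurable_set1 : forall a : T, measurable [set a].
Implicit Types (nu : set T -> R) (a b p : T) (A B : set T).

Lemma cvg_sum_indic (F : (set T)^nat) p : (forall n, measurable (F n)) ->
  trivIset setT F ->
  (fun n => \sum_(i < n) (\1_(F i) p : R)) @ \oo --> (\1_(\bigcup_n F n) p : R).
Proof.
move=> mF tF.
have := @measure_semi_sigma_additive _ _ _ (@dirac _ T p R) F mF tF.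
move=> /(_ (bigcupT_measurable F mF)) /fine_cvg h; apply: (cvg_trans _ h).
apply: near_eq_cvg; apply: nearW => n /=; rewrite big_mkord.
by rewrite (eq_bigr (fun i : 'I_n => (\1_(F i) p)%:E)) ?sumEFin.
Qed.

Lemma is_fsmeasure_point_masses a b (e : R) :
  is_fsmeasure (fun A => \1_A a + e * \1_A b).
Proof.
split; first by rewrite !indic_notin // mulr0 addr0.
move=> F mF tF.
rewrite (@eq_cvg _ _ _ _
    (fun n => \sum_(i < n) \1_(F i) a + e * \sum_(i < n) \1_(F i) b)); last first.
  by move=> n /=; rewrite big_split /= mulr_sumr.
apply: cvgD; first exact: cvg_sum_indic.
apply: cvgM; [exact: cvg_cst | exact: cvg_sum_indic].
Qed.

Lemma fsmeasure_setU nu A B : is_fsmeasure nu -> measurable A -> measurable B ->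
  A `&` B = set0 -> nu (A `|` B) = nu A + nu B.
Proof.
move=> [nu0 nu_sadd] mA mB AB.
have mF : forall i, measurable (bigcup2 A B i) by case=> [|[|i]] /=.
have := nu_sadd _ mF; rewrite -trivIset_bigcup2 bigcup2E => /(_ AB) h1.
have h2 : (fun n => \sum_(i < n) nu (bigcup2 A B i)) @ \oo --> nu A + nu B.
  apply: cvg_near_cst; exists 2%N => //= -[|[|m]] // _.
  by rewrite !big_ord_recl /= big1 ?addr0 // => i _; rewrite nu0.
by rewrite -(cvg_lim (@Rhausdorff R) h1) (cvg_lim (@Rhausdorff R) h2).
Qed.

Lemma fsmeasure_setD1 nu A p : is_fsmeasure nu -> measurable A ->
  nu A = nu (A `\ p) + \1_A p * nu [set p].
Proof.
move=> fnu mA; have [Ap|Ap] := pselect (A p); last first.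
  by rewrite not_setD1 // indic_notin // mul0r addr0.
rewrite indic_in // mul1r -[in LHS](setD1K Ap) setUC fsmeasure_setU //.
- exact: measurableD.
- by rewrite setIC; apply/seteqP; split => x //= -[-> [_ h]]; apply: h.
Qed.

Lemma fsmeasure_eq_dirac_add nu a b : a <> b -> is_fsmeasure nu ->
  (forall B, measurable B -> nu B <= \1_B a + \1_B b) ->
  1 <= nu [set a] -> 1 <= nu [set b] ->
  (forall B, measurable B -> ~ B a -> ~ B b -> 0 <= nu B) ->
  forall B, measurable B -> nu B = \1_B a + \1_B b.
Proof.
move=> ab fnu nu_le nua nub nu_ge0 B mB; apply/le_anti; rewrite nu_le //=.
have mBa : measurable (B `\ a) by exact: measurableD.
rewrite (fsmeasure_setD1 a fnu mB) (fsmeasure_setD1 b fnu mBa) indic_setD1; last first.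
  by move=> ba; apply: ab.
have : 0 <= nu (B `\ a `\ b).
  apply: nu_ge0; first exact: measurableD.
    by move=> [[_ /(_ erefl)]].
  by move=> [_ /(_ erefl)].
have : \1_B a <= \1_B a * nu [set a] by rewrite ler_peMr // indic_ge0.
have : \1_B b <= \1_B b * nu [set b] by rewrite ler_peMr // indic_ge0.
lra.
Qed.

Lemma fsmeasure_eq0 nu c : is_fsmeasure nu ->
  (forall B, measurable B -> 0 <= nu B) ->
  (forall B, measurable B -> ~ B c -> nu B <= 0) -> nu [set c] <= 0 ->
  forall B, measurable B -> nu B = 0.
Proof.
move=> fnu nu_ge0 nu_le0 nuc B mB; apply/le_anti; rewrite nu_ge0 // andbT.
rewrite (fsmeasure_setD1 c fnu mB).
have : nu (B `\ c) <= 0.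
  by apply: nu_le0; [exact: measurableD | move=> [_ /(_ erefl)]].
have : \1_B c * nu [set c] <= 0 by rewrite mulr_ge0_le0 // indic_ge0.
lra.
Qed.

End FiniteSignedMeasures.

Section TwoPointKernels.
Context {d : measure_display} {T : measurableType d} {R : realType}.
Hypothesis measurable_set1 : forall a : T, measurable [set a].
Implicit Types (phi psi : T -> T) (e : R) (t : T -> set T -> R).

Definition two_point_kernel phi psi e : T -> set T -> R :=
  fun x A => \1_A (phi x) + e * \1_A (psi x).

Lemma opp_two_point_kernel phi psi :
  opp_kernel (two_point_kernel phi psi (-1)) = two_point_kernel psi phi (-1).
Proof. by apply/funext => x; apply/funext => A; rewrite /opp_kernel /two_point_kernel; lra. Qed.

Lemma normr_two_point_kernel_le phi psi e x A :
  `|two_point_kernel phi psi e x A| <= 1 + `|e|.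
Proof.
rewrite (le_trans (ler_normD _ _)) // normrM lerD ?normr_indic_le1 //.
by rewrite ler_piMr ?normr_indic_le1.
Qed.

Lemma measurable_two_point_kernel phi psi e A :
  measurable_fun setT phi -> measurable_fun setT psi -> measurable A ->
  measurable_fun setT (fun x => two_point_kernel phi psi e x A).
Proof.
move=> mphi mpsi mA.
have mindic (g : T -> T) : measurable_fun setT g -> measurable_fun setT (fun x => \1_A (g x) : R).
  move=> mg; have mgA : measurable (g @^-1` A) by rewrite -[_ @^-1` _]setTI; exact: mg.
  rewrite (_ : (fun x => _) = \1_(g @^-1` A)); first exact: measurable_indic.
  by apply/funext => x; rewrite !indicE.
by apply: measurable_funD; [exact: mindic | apply: measurable_funM; [|exact: mindic]].
Qed.

Lemma sint_two_point_kernel phi psi e x (f : T -> R) : (e = 1 \/ e = -1) ->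
  measurable_fun setT f -> sint (two_point_kernel phi psi e x) f = f (phi x) + e * f (psi x).
Proof.
move=> [->|->] mf; rewrite ?mul1r ?mulN1r.
  by apply: (sint_dirac_add measurable_set1) => // B mB; rewrite /two_point_kernel mul1r.
have [E|ne] := pselect (phi x = psi x).
  by rewrite sint_eq0 ?E ?subrr // => B mB; rewrite /two_point_kernel E mulN1r subrr.
by apply: (sint_dirac_sub measurable_set1) => // B mB; rewrite /two_point_kernel mulN1r.
Qed.

Lemma tvar_two_point_kernel_le phi psi e x : (e = 1 \/ e = -1) ->
  (tvar (two_point_kernel phi psi e x) setT <= 2%:E)%E.
Proof.
rewrite /tvar /two_point_kernel => -[->|->].
  have h B : measurable B -> \1_B (phi x) + 1 * \1_B (psi x) = \1_B (phi x) + \1_B (psi x) :> R.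
    by rewrite mul1r.
  by rewrite (jpos_dirac_add measurable_set1 h) (jneg_dirac_add h) adde0 lee_fin !indic_in.
have [E|ne] := pselect (phi x = psi x).
  have h0 B : measurable B -> \1_B (phi x) + -1 * \1_B (psi x) = 0 :> R.
    by rewrite E mulN1r subrr.
  by have [-> ->] := jordan_eq0 h0; rewrite adde0 lee_fin.
have h B : measurable B -> \1_B (phi x) + -1 * \1_B (psi x) = \1_B (phi x) - \1_B (psi x) :> R.
  by rewrite mulN1r.
by rewrite (jpos_dirac_sub measurable_set1 ne h) (jneg_dirac_sub measurable_set1 ne h) -EFinD lee_fin !indic_in.
Qed.

Lemma is_bounded_two_point_kernel phi psi e :
  measurable_fun setT phi -> measurable_fun setT psi -> (e = 1 \/ e = -1) ->
  is_bounded_kernel (two_point_kernel phi psi e).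
Proof.
move=> mphi mpsi he; split; last by exists 2 => x; exact: tvar_two_point_kernel_le.
split => [x|A mA]; first exact: is_fsmeasure_point_masses.
exact: measurable_two_point_kernel.
Qed.

Lemma op_apply_dirac t x A : measurable_fun setT (fun y => t y A) ->
  op_apply t (\d_x) A = t x A.
Proof. by move=> mt; rewrite /op_apply integral_dirac_fin. Qed.

Lemma op_le_dirac t1 t2 x A : op_le t1 t2 -> measurable A ->
  measurable_fun setT (fun y => t1 y A) -> measurable_fun setT (fun y => t2 y A) ->
  t1 x A <= t2 x A.
Proof.
move=> t12 mA m1 m2; rewrite -(op_apply_dirac x m1) -(op_apply_dirac x m2).
by apply: t12 => //; exact: ltry.
Qed.

Lemma op_le_pointwise t1 t2 :
  (forall A, measurable A -> measurable_fun setT (fun y => t1 y A)) ->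
  (forall A, measurable A -> measurable_fun setT (fun y => t2 y A)) ->
  (exists c, forall x A, `|t1 x A| <= c) -> (exists c, forall x A, `|t2 x A| <= c) ->
  (forall x A, measurable A -> t1 x A <= t2 x A) -> op_le t1 t2.
Proof.
move=> m1 m2 [c1 b1] [c2 b2] t12 mu fmu A mA; rewrite /op_apply.
have bdd_int t c : measurable_fun setT (fun y => t y A) -> (forall x A, `|t x A| <= c) ->
    mu.-integrable setT (EFin \o (fun y => t y A)).
  move=> mt bt; apply: measurable_bounded_integrable => //.
  exists c; split; first exact: num_real.
  by move=> M cM x _ /=; rewrite (le_trans (bt x A)) // ltW.
have i1 := bdd_int _ _ (m1 _ mA) b1; have i2 := bdd_int _ _ (m2 _ mA) b2.
apply: fine_le; try exact: integrable_fin_num.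
by apply: le_integral => // x _; rewrite lee_fin; exact: t12.
Qed.

Lemma op_le_two_point_kernel phi psi e phi' psi' e' :
  measurable_fun setT phi -> measurable_fun setT psi ->
  measurable_fun setT phi' -> measurable_fun setT psi' ->
  (forall x A, two_point_kernel phi psi e x A <= two_point_kernel phi' psi' e' x A) ->
  op_le (two_point_kernel phi psi e) (two_point_kernel phi' psi' e').
Proof.
move=> mphi mpsi mphi' mpsi' le_pt; apply: op_le_pointwise => [A mA|A mA| | |x A _].
- exact: measurable_two_point_kernel.
- exact: measurable_two_point_kernel.
- by exists (1 + `|e|) => x A; exact: normr_two_point_kernel_le.
- by exists (1 + `|e'|) => x A; exact: normr_two_point_kernel_le.
- exact: le_pt.
Qed.

End TwoPointKernels.

Section Omega.
Variable R : realType.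
Local Notation O := (Om R).
Local Notation T := (OmB R).
Local Notation tpk := (@two_point_kernel _ T R).

Definition omval (x : O) : R := @set_val R (Om0 R) x.

Lemma omval_inj : injective omval.
Proof. by move=> x y; apply: val_inj. Qed.

Lemma omval_continuous : continuous omval.
Proof. exact: (@initial_continuous _ R (@set_val R (Om0 R))). Qed.

Lemma measurable_open (U : set T) : @open O U -> measurable U.
Proof. by move=> oU; apply: sub_sigma_algebra. Qed.

Lemma measurable_set1_Om (a : T) : measurable [set a].
Proof.
rewrite -[X in measurable X]setCK; apply: measurableC; apply: measurable_open.
have -> : ~` [set a] = omval @^-1` (~` [set omval a]).
  by apply/seteqP; split => x /= xa; [move/omval_inj | move=> ex; apply: xa; rewrite ex].
exists (~` [set omval a]) => //; apply: closed_openC.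
exact: (accessible_closed_set1 (hausdorff_accessible (@Rhausdorff R))).
Qed.

Lemma measurable_fun_continuous (f : O -> R) :
  continuous f -> measurable_fun (setT : set T) f.
Proof.
move=> /continuousP cf.
apply: (measurability _ (measurable_realfun.RGenOpens.measurableE R)).
move=> _ [_ [a [b ->] <-]]; rewrite setTI; apply: measurable_open.
exact/cf/interval_open.
Qed.

Lemma measurable_fun_continuous_map (f : O -> O) :
  continuous f -> measurable_fun (setT : set T) (f : T -> T).
Proof.
move=> /continuousP cf.
apply: (@measurability _ _ T T setT (f : T -> T) (@open O) erefl).
by move=> _ [U oU <-]; rewrite setTI; apply: measurable_open; exact: cf.
Qed.

Lemma continuous_lift (f : O -> O) (g : R -> R) :
  continuous g -> (forall x, omval (f x) = g (omval x)) -> continuous f.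
Proof.
move=> cg fg; apply: (@continuous_comp_initial _ O R (@set_val R (Om0 R))).
have -> : @set_val R (Om0 R) \o f = g \o omval by apply: funext => x /=; exact: fg.
by move=> x; apply: continuous_comp; [exact: omval_continuous | exact: cg].
Qed.

Lemma Om0N x : Om0 R x -> Om0 R (- x).
Proof.
case=> [->|[n [->|->]]]; first by left; rewrite oppr0.
- by right; exists n; right.
- by right; exists n; left; rewrite opprK.
Qed.

Lemma Om0_norm x : Om0 R x -> Om0 R `|x|.
Proof. by move=> h; case: (ger0P x) => _; [|apply: Om0N]. Qed.

Definition mkOm (x : R) (h : Om0 R x) : O := @exist R (fun x => x \in Om0 R) x (mem_set h).

Lemma omval_mkOm x (h : Om0 R x) : omval (mkOm h) = x. Proof. by []. Qed.

Definition oppOm (x : O) : O := mkOm (Om0N (set_valP x)).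
Definition normOm (x : O) : O := mkOm (Om0_norm (set_valP x)).
Definition nnormOm (x : O) : O := mkOm (Om0N (Om0_norm (set_valP x))).

Lemma oppOm_continuous : continuous oppOm.
Proof. by apply: (@continuous_lift _ (fun x => - x)) => //; exact: opp_continuous. Qed.

Lemma normOm_continuous : continuous normOm.
Proof. by apply: (@continuous_lift _ (fun x => `|x|)) => //; exact: norm_continuous. Qed.

Lemma nnormOm_continuous : continuous nnormOm.
Proof.
apply: (@continuous_lift _ (fun x => - `|x|)) => // x.
by apply: continuous_comp; [exact: norm_continuous | exact: opp_continuous].
Qed.

Lemma idOm_continuous : continuous (@id O).
Proof. by move=> x. Qed.

#[local] Hint Resolve idOm_continuous oppOm_continuous normOm_continuous
  nnormOm_continuous : core.

Lemma sigma_cont_two_point_kernel (phi psi : O -> O) (e : R) :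
  continuous phi -> continuous psi -> (e = 1 \/ e = -1) ->
  sigma_cont (tpk phi psi e).
Proof.
move=> cphi cpsi he; split.
  apply: (is_bounded_two_point_kernel measurable_set1_Om) => //;
  exact: measurable_fun_continuous_map.
move=> f [cf [M hM]].
have -> : adjoint (tpk phi psi e) f = fun x => f (phi x) + e * f (psi x).
  apply/funext => x; rewrite /adjoint (sint_two_point_kernel measurable_set1_Om) //.
  exact: measurable_fun_continuous.
split.
  have fphi : continuous (f \o phi) := fun x => continuous_comp (cphi x) (cf _).
  have fpsi : continuous (f \o psi) := fun x => continuous_comp (cpsi x) (cf _).
  move=> x; apply: cvgD; [exact: nbhs_filter | exact: fphi |].
  by apply: cvgM; [exact: nbhs_filter | exact: (@cst_continuous O R e x) | exact: fpsi].
exists (M + M) => x; rewrite (le_trans (ler_normD _ _)) // lerD // normrM.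
by case: he => ->; rewrite ?normrN normr1 mul1r.
Qed.


Lemma Om0_pos n : Om0 R (n.+1%:R)^-1. Proof. by right; exists n; left. Qed.
Lemma Om0_neg n : Om0 R (- (n.+1%:R)^-1). Proof. by right; exists n; right. Qed.

Definition pos_pt n : O := mkOm (Om0_pos n).
Definition neg_pt n : O := mkOm (Om0_neg n).

Lemma pos_pt_neq_neg_pt n : pos_pt n <> neg_pt n.
Proof.
move/(congr1 omval); rewrite !omval_mkOm => /eqP; rewrite -subr_eq0 opprK -mulr2n mulrn_eq0 /=.
by rewrite invr_eq0 pnatr_eq0.
Qed.

Lemma nnormOm_pos_pt n : nnormOm (pos_pt n) = neg_pt n.
Proof. by apply: omval_inj; rewrite !omval_mkOm gtr0_norm // invr_gt0. Qed.

Lemma nnormOm_neg_pt n : nnormOm (neg_pt n) = neg_pt n.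
Proof. by apply: omval_inj; rewrite !omval_mkOm normrN gtr0_norm // invr_gt0. Qed.

Lemma normOm_neg_pt n : normOm (neg_pt n) = pos_pt n.
Proof. by apply: omval_inj; rewrite !omval_mkOm normrN gtr0_norm // invr_gt0. Qed.

Lemma oppOm_neg_pt n : oppOm (neg_pt n) = pos_pt n.
Proof. by apply: omval_inj; rewrite !omval_mkOm opprK. Qed.

Lemma cvg_omval (u : nat -> O) y : (omval \o u) @ \oo --> omval y -> u @ \oo --> y.
Proof.
move=> uy U; rewrite nbhsE => -[V [[W oW WV] Vy] VU].
have Wy : nbhs (omval y) W by apply: open_nbhs_nbhs; split => //; rewrite -WV in Vy.
by case: (uy W Wy) => N _ HN; exists N => // n Nn; apply: VU; rewrite -WV; exact: HN.
Qed.

Lemma pos_pt_cvg : pos_pt @ \oo --> om0 R.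
Proof. exact/cvg_omval/cvg_harmonic. Qed.

Lemma neg_pt_cvg : neg_pt @ \oo --> om0 R.
Proof.
apply: cvg_omval; rewrite [X in _ --> X](_ : _ = - 0); last by rewrite oppr0.
exact: cvgN cvg_harmonic.
Qed.

Lemma continuous_pos_neg_pt (g : O -> R) c c' : continuous g ->
  (forall n, g (pos_pt n) = c) -> (forall n, g (neg_pt n) = c') -> c = c'.
Proof.
move=> cg gpos gneg.
have lim_at0 (u : nat -> O) a : u @ \oo --> om0 R -> (forall n, g (u n) = a) ->
    a = g (om0 R).
  move=> cu gu; have gu0 := continuous_cvg _ (cg _) cu.
  rewrite (_ : g \o u = cst a) in gu0; last by apply/funext => n /=.
  by rewrite -(cvg_lim (@Rhausdorff R) (gu0 _)) lim_cst.
by rewrite (lim_at0 _ _ pos_pt_cvg gpos) (lim_at0 _ _ neg_pt_cvg gneg).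
Qed.

Lemma Cb_one : Cb (fun _ : O => 1 : R).
Proof. by split; [exact: cst_continuous | exists 1 => x; rewrite normr1]. Qed.

Lemma adjoint_one_not_Cb (nu : T -> set T -> R) :
  (forall n B, measurable B ->
     nu (pos_pt n) B = \1_B (pos_pt n : T) + \1_B (neg_pt n : T)) ->
  (forall n B, measurable B -> nu (neg_pt n) B = 0) ->
  ~ Cb (adjoint nu (fun _ => 1)).
Proof.
move=> nu_pos nu_neg [cadj _].
suff : (1 + 1 : R) = 0 by lra.
apply: (continuous_pos_neg_pt cadj) => n; rewrite /adjoint.
  by apply: (sint_dirac_add measurable_set1_Om (nu_pos n)); exact: measurable_cst.
exact: sint_eq0 (nu_neg n).
Qed.


Definition jump_kernel : T -> set T -> R := tpk id nnormOm (-1).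
Definition upper_kernel1 : T -> set T -> R := tpk id nnormOm 1.
Definition upper_kernel2 : T -> set T -> R := tpk normOm oppOm 1.

Lemma measurable_tpk_Om (phi psi : O -> O) e A : continuous phi -> continuous psi ->
  measurable A -> measurable_fun setT (fun x => tpk phi psi e x A).
Proof.
by move=> cphi cpsi; apply: measurable_two_point_kernel;
  exact: measurable_fun_continuous_map.
Qed.

Lemma op_le_tpk_Om (phi psi : O -> O) e (phi' psi' : O -> O) e' :
  continuous phi -> continuous psi -> continuous phi' -> continuous psi' ->
  (forall x A, tpk phi psi e x A <= tpk phi' psi' e' x A) ->
  op_le (tpk phi psi e) (tpk phi' psi' e').
Proof.
by move=> *; apply: op_le_two_point_kernel => //; exact: measurable_fun_continuous_map.
Qed.

Lemma jump_le_upper1 : op_le jump_kernel upper_kernel1.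
Proof.
apply: op_le_tpk_Om => // x A.
by rewrite /two_point_kernel lerD2l; have := indic_ge0 (R := R) A (nnormOm x : T); lra.
Qed.

Lemma opp_jump_le_upper1 : op_le (opp_kernel jump_kernel) upper_kernel1.
Proof.
rewrite /jump_kernel opp_two_point_kernel.
apply: op_le_tpk_Om => // x A.
by rewrite /two_point_kernel; have := indic_ge0 (R := R) A (x : T); lra.
Qed.

Lemma nnormOm_ge0 (x : O) : 0 <= omval x -> nnormOm x = oppOm x.
Proof. by move=> x0; apply: omval_inj; rewrite !omval_mkOm ger0_norm. Qed.

Lemma normOm_ge0 (x : O) : 0 <= omval x -> normOm x = x.
Proof. by move=> x0; apply: omval_inj; rewrite omval_mkOm ger0_norm. Qed.

Lemma nnormOm_lt0 (x : O) : omval x < 0 -> nnormOm x = x.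
Proof. by move=> x0; apply: omval_inj; rewrite omval_mkOm ltr0_norm // opprK. Qed.

Lemma jump_le_upper2 : op_le jump_kernel upper_kernel2.
Proof.
apply: op_le_tpk_Om => // x A.
rewrite /two_point_kernel; have [x0|x0] := leP 0 (omval x).
  rewrite nnormOm_ge0 // normOm_ge0 //; have := indic_ge0 (R := R) A (oppOm x : T); lra.
rewrite nnormOm_lt0 //; have := indic_ge0 (R := R) A (normOm x : T).
have := indic_ge0 (R := R) A (oppOm x : T); lra.
Qed.

Lemma opp_jump_le_upper2 : op_le (opp_kernel jump_kernel) upper_kernel2.
Proof.
rewrite /jump_kernel opp_two_point_kernel.
apply: op_le_tpk_Om => // x A.
rewrite /two_point_kernel; have [x0|x0] := leP 0 (omval x).
  rewrite nnormOm_ge0 // normOm_ge0 //; have := indic_ge0 (R := R) A (x : T); lra.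
rewrite nnormOm_lt0 //; have := indic_ge0 (R := R) A (normOm x : T).
have := indic_ge0 (R := R) A (oppOm x : T); lra.
Qed.


Lemma abs_jump_kernel_not_Cb : ~ adj_preserves_Cb (abs_kernel jump_kernel).
Proof.
move=> /(_ _ Cb_one); apply: adjoint_one_not_Cb => n B mB.
  have ne := @pos_pt_neq_neg_pt n.
  have jump_pos C : measurable C ->
      jump_kernel (pos_pt n) C = \1_C (pos_pt n : T) - \1_C (neg_pt n : T).
    by move=> _; rewrite /jump_kernel /two_point_kernel nnormOm_pos_pt mulN1r.
  rewrite /abs_kernel /tvar (jpos_dirac_sub measurable_set1_Om ne jump_pos).
  by rewrite (jneg_dirac_sub measurable_set1_Om ne jump_pos).
have jump_neg C : measurable C -> jump_kernel (neg_pt n) C = 0.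
  by move=> _; rewrite /jump_kernel /two_point_kernel nnormOm_neg_pt mulN1r subrr.
by rewrite /abs_kernel /tvar; have [-> ->] := jordan_eq0 jump_neg; rewrite adde0.
Qed.

Section Modulus.
Variable s : T -> set T -> R.
Hypothesis s_modulus : is_modulus_in_sigma_cont s jump_kernel.

Let s_fsmeasure x : is_fsmeasure (s x).
Proof. by case: s_modulus => [[[[fs _] _] _] _]. Qed.

Let s_measurable A : measurable A -> measurable_fun setT (fun x => s x A).
Proof. by case: s_modulus => [[[[_ ms] _] _] _]; exact: ms. Qed.

Let jump_le_s x A : measurable A -> jump_kernel x A <= s x A.
Proof.
move=> mA; apply: (op_le_dirac x s_modulus.2.1 mA _ (s_measurable mA)).
by apply: measurable_tpk_Om.
Qed.

Let opp_jump_le_s x A : measurable A -> tpk nnormOm id (-1) x A <= s x A.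
Proof.
move=> mA; apply: (op_le_dirac x _ mA _ (s_measurable mA)).
  by rewrite -opp_two_point_kernel; exact: s_modulus.2.2.1.
by apply: measurable_tpk_Om.
Qed.

Let s_le_upper (t : T -> set T -> R) x A : sigma_cont t ->
  op_le jump_kernel t -> op_le (opp_kernel jump_kernel) t ->
  (forall A, measurable A -> measurable_fun setT (fun x => t x A)) ->
  measurable A -> s x A <= t x A.
Proof.
move=> ct jt ojt mt mA.
exact: op_le_dirac (s_modulus.2.2.2 t ct jt ojt) mA (s_measurable mA) (mt A mA).
Qed.

Let s_le_upper1 x A : measurable A -> s x A <= upper_kernel1 x A.
Proof.
apply: s_le_upper.
- exact: sigma_cont_two_point_kernel (or_introl _).
- exact: jump_le_upper1.
- exact: opp_jump_le_upper1.
- by move=> B; apply: measurable_tpk_Om.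
Qed.

Let s_le_upper2 x A : measurable A -> s x A <= upper_kernel2 x A.
Proof.
apply: s_le_upper.
- exact: sigma_cont_two_point_kernel (or_introl _).
- exact: jump_le_upper2.
- exact: opp_jump_le_upper2.
- by move=> B; apply: measurable_tpk_Om.
Qed.

Lemma modulus_at_pos_pt n B : measurable B ->
  s (pos_pt n) B = \1_B (pos_pt n : T) + \1_B (neg_pt n : T).
Proof.
have ne := @pos_pt_neq_neg_pt n.
apply: (fsmeasure_eq_dirac_add measurable_set1_Om ne (s_fsmeasure _)).
- move=> C mC; have := s_le_upper1 (pos_pt n) mC.
  by rewrite /upper_kernel1 /two_point_kernel nnormOm_pos_pt mul1r.
- have := jump_le_s (pos_pt n) (measurable_set1_Om (pos_pt n)).
  rewrite /jump_kernel /two_point_kernel nnormOm_pos_pt indic_in //.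
  by rewrite indic_notin ?mulr0 ?addr0 // => /esym.
- have := opp_jump_le_s (pos_pt n) (measurable_set1_Om (neg_pt n)).
  rewrite /two_point_kernel nnormOm_pos_pt indic_in //.
  by rewrite indic_notin ?mulr0 ?addr0.
- move=> C mC Cpos Cneg; have := jump_le_s (pos_pt n) mC.
  by rewrite /jump_kernel /two_point_kernel nnormOm_pos_pt !indic_notin // mulr0 addr0.
Qed.

Lemma modulus_at_neg_pt n B : measurable B -> s (neg_pt n) B = 0.
Proof.
apply: (fsmeasure_eq0 measurable_set1_Om (c := neg_pt n : T) (s_fsmeasure _)).
- move=> C mC; have := jump_le_s (neg_pt n) mC.
  by rewrite /jump_kernel /two_point_kernel nnormOm_neg_pt mulN1r subrr.
- move=> C mC Cneg; have := s_le_upper1 (neg_pt n) mC.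
  by rewrite /upper_kernel1 /two_point_kernel nnormOm_neg_pt !indic_notin // mulr0 addr0.
- have := s_le_upper2 (neg_pt n) (measurable_set1_Om (neg_pt n)).
  rewrite /upper_kernel2 /two_point_kernel normOm_neg_pt oppOm_neg_pt.
  by rewrite indic_notin ?mulr0 ?addr0 //; exact: pos_pt_neq_neg_pt.
Qed.

End Modulus.

Lemma jump_kernel_no_modulus :
  ~ (exists s : T -> set T -> R, is_modulus_in_sigma_cont s jump_kernel).
Proof.
move=> [s s_mod]; have [[_ s_adj] _] := s_mod.
apply: (adjoint_one_not_Cb (modulus_at_pos_pt s_mod) (modulus_at_neg_pt s_mod)).
exact: s_adj Cb_one.
Qed.

End Omega.

Theorem mainTheorem3 (R : realType) :
  exists k : OmB R -> set (OmB R) -> R,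
    sigma_cont k /\
    ~ adj_preserves_Cb (abs_kernel k) /\
    ~ (exists s : OmB R -> set (OmB R) -> R, is_modulus_in_sigma_cont s k).
Proof.
exists (@jump_kernel R); split.
  by apply: sigma_cont_two_point_kernel; [exact: idOm_continuous | exact: nnormOm_continuous | right].
by split; [exact: abs_jump_kernel_not_Cb | exact: jump_kernel_no_modulus].
Qed.
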